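(* Let $(\Delta X)_X$ be a quasi-regular family and let $A$ be a $\Delta$-regular algebra with structure map $\beta:\mathrm{FT}\,A\to A$. Extend $\beta$ to $\Delta A$ by $$\beta(t)=\bigvee\{\beta(s)\;:\; s\ll t\}\qquad (t\in\Delta A)$$ (these suprema exist because the sets involved are $\Delta$-sets; on finite terms this agrees with the original $\beta$). Then $(A,\beta)$ with $\beta:\Delta A\to A$ is an Eilenberg–Moore algebra for the monad $(\Delta,\mu,\eta)$; that is, $\beta(\eta_A(a))=a$ for all $a\in A$, and $\beta\circ\mu_A=\beta\circ\Delta\beta$ as maps $\Delta(\Delta A)\to A$; equivalently, for every $t(s_i\mid i\in I)\in\Delta(\Delta A)$ with $s_i\in \Delta A$, $\beta(t(s_i\mid i\in I))=\beta(t(\beta(s_i)\mid i\in I))$, where on the left the term of terms is flattened into a term over $A$.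
   Context: Fix a ranked alphabet $\Sigma$. An ordered $\Sigma$-algebra is a $\Sigma$-algebra $A$ with a partial order $\le$ having a least element $\bot^A$ such that every operation is monotone. $\mathrm{FT}\,X$ denotes the finite partial $\Sigma$-terms over a set $X$ (finite trees with internal nodes labeled by symbols of $\Sigma$ of matching arity, leaves labeled by constants or elements of $X$, and possibly missing subterms, written $\bot$), and $\mathrm{CT}\,X$ the partial $\Sigma$-coterms (finite or infinite such trees), ordered by extension of partial trees; $\mathrm{CT}\,X$ is the free $\omega$-continuous algebra on $X$ (countable directed sups exist and operations preserve them; morphisms are strict monotone operation-preserving maps preserving countable directed sups). A quasi-regular family is a family $(\Delta X)_X$, indexed by all sets, with each $\Delta X$ an ordered $\Sigma$-subalgebra of $\mathrm{CT}\,X$ containing $X$, such that every morphism $h:\mathrm{CT}\,X\to\mathrm{CT}\,Y$ of $\omega$-continuous algebras with $h(X)\subseteq\Delta Y$ satisfies $h(\Delta X)\subseteq \Delta Y$. Then $\Delta$ is a monad on sets (a submonad of the coterm monad): $\eta_X:X\to\Delta X$ sends $x$ to the one-node term $x$; for $g:X\to Y$, $\Delta g:\Delta X\to\Delta Y$ relabels leaves by $g$; $\mu_X:\Delta(\Delta X)\to\Delta X$ substitutes, at each leaf, the term labeling it and flattens. For an ordered algebra $A$, its structure map $\beta:\mathrm{FT}\,A\to A$ evaluates finite partial terms over $A$ in $A$ (leaf $a\mapsto a$, $\bot\mapsto\bot^A$). For $t_1,t_2\in\mathrm{CT}\,X$, write $t_1\ll t_2$ if $t_1\in\mathrm{FT}\,X$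 and $t_1$ is obtained from $t_2$ by deleting subterms (i.e. agrees with $t_2$ as a labeled tree wherever $t_1$ is defined). A subset $B\subseteq A$ is a $\Delta$-set if $B=\{\beta(s):s\ll t\}$ for some $t\in\Delta A$ (such a set is countable and directed). $A$ is a $\Delta$-regular algebra if every $\Delta$-set in $A$ has a supremum and the operations preserve suprema of $\Delta$-sets, i.e. for $f\in\Sigma_n$ and $\Delta$-sets $B_1,\dots,B_n$, $f^A(\bigvee B_1,\dots,\bigvee B_n)=\bigvee\{f^A(b_1,\dots,b_n): b_i\in B_i\}$. *)

From Stdlib Require Import List Arith.
Import ListNotations.
Set Implicit Arguments.

(* Partial Sigma-(co)terms over X, represented as partial labelings of
   positions (paths of child indices from the root).  [None] = undefined
   (bottom / missing subterm). *)
Definition term (Sym X : Type) := list nat -> option (Sym + X).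

Definition arity {Sym X : Type} (ar : Sym -> nat) (l : Sym + X) : nat :=
  match l with inl f => ar f | inr _ => 0 end.

Definition isCT {Sym X : Type} (ar : Sym -> nat) (t : term Sym X) : Prop :=
  forall p i, t (p ++ [i]) <> None ->
    exists l, t p = Some l /\ i < arity ar l.

Definition tle {Sym X : Type} (t u : term Sym X) : Prop :=
  forall p l, t p = Some l -> u p = Some l.

Definition bounded {Sym X : Type} (n : nat) (t : term Sym X) : Prop :=
  forall p, n <= length p -> t p = None.

Definition isFT {Sym X : Type} (ar : Sym -> nat) (t : term Sym X) : Prop :=
  isCT ar t /\ exists n, bounded n t.

Definition tll {Sym X : Type} (ar : Sym -> nat) (s t : term Sym X) : Prop :=
  isFT ar s /\ tle s t.

Definition tbot {Sym X : Type} : term Sym X := fun _ => None.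

Definition teta {Sym X : Type} (x : X) : term Sym X :=
  fun p => match p with [] => Some (inr x) | _ => None end.

Definition top {Sym X : Type} (ar : Sym -> nat) (f : Sym)
  (ts : nat -> term Sym X) : term Sym X :=
  fun p => match p with
           | [] => Some (inl f)
           | i :: q => if i <? ar f then ts i q else None
           end.

Fixpoint subst {Sym X Y : Type} (t : term Sym Y) (g : Y -> term Sym X)
  (p : list nat) {struct p} : option (Sym + X) :=
  match t [] with
  | Some (inr y) => g y p
  | Some (inl f) =>
      match p with
      | [] => Some (inl f)
      | i :: p' => subst (fun q => t (i :: q)) g p'
      end
  | None => None
  end.

Definition directed {T : Type} (le : T -> T -> Prop) (u : nat -> T) : Prop :=
  forall i j, exists k, le (u i) (u k) /\ le (u j) (u k).

Definition is_lub {T : Type} (le : T -> T -> Prop) (P : T -> Prop) (s : T) : Prop :=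
  (forall x, P x -> le x s) /\ (forall b, (forall x, P x -> le x b) -> le s b).

Definition ct_lub {Sym X : Type} (ar : Sym -> nat) (u : nat -> term Sym X)
  (s : term Sym X) : Prop :=
  (forall n, tle (u n) s) /\
  (forall b, isCT ar b -> (forall n, tle (u n) b) -> tle s b).

Definition omega_morph {Sym X Y : Type} (ar : Sym -> nat)
  (h : term Sym X -> term Sym Y) : Prop :=
  (forall t, isCT ar t -> isCT ar (h t)) /\
  h tbot = tbot /\
  (forall t u, isCT ar t -> isCT ar u -> tle t u -> tle (h t) (h u)) /\
  (forall f ts, (forall i, i < ar f -> isCT ar (ts i)) ->
     h (top ar f ts) = top ar f (fun i => h (ts i))) /\
  (forall (u : nat -> term Sym X) s,
     (forall n, isCT ar (u n)) -> directed tle u -> isCT ar s ->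
     ct_lub ar u s -> ct_lub ar (fun n => h (u n)) (h s)).

Definition quasi_regular {Sym : Type} (ar : Sym -> nat)
  (Delta : forall X : Type, term Sym X -> Prop) : Prop :=
  (forall X : Type,
     (forall t, Delta X t -> isCT ar t) /\
     (forall x : X, Delta X (teta x)) /\
     Delta X tbot /\
     (forall f ts, (forall i, i < ar f -> Delta X (ts i)) ->
        Delta X (top ar f ts))) /\
  (forall (X Y : Type) (h : term Sym X -> term Sym Y),
     omega_morph ar h -> (forall x : X, Delta Y (h (teta x))) ->
     forall t, Delta X t -> Delta Y (h t)).

(* ordered Sigma-algebra; operations take argument families nat -> A, of
   which only the indices < ar f are relevant *)
Definition ordered_alg {Sym A : Type} (ar : Sym -> nat) (le : A -> A -> Prop)
  (bot : A) (op : Sym -> (nat -> A) -> A) : Prop :=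
  (forall a, le a a) /\
  (forall a b, le a b -> le b a -> a = b) /\
  (forall a b c, le a b -> le b c -> le a c) /\
  (forall a, le bot a) /\
  (forall f a b, (forall i, i < ar f -> a i = b i) -> op f a = op f b) /\
  (forall f a b, (forall i, i < ar f -> le (a i) (b i)) -> le (op f a) (op f b)).

Fixpoint evalN {Sym A : Type} (bot : A) (op : Sym -> (nat -> A) -> A)
  (n : nat) (t : term Sym A) : A :=
  match n with
  | 0 => bot
  | S n' =>
      match t [] with
      | None => bot
      | Some (inr a) => a
      | Some (inl f) => op f (fun i => evalN bot op n' (fun q => t (i :: q)))
      end
  end.

(* the Delta-set {beta(s) : s << t} *)
Definition DS {Sym A : Type} (ar : Sym -> nat) (bot : A)
  (op : Sym -> (nat -> A) -> A) (t : term Sym A) : A -> Prop :=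
  fun a => exists s n, tll ar s t /\ bounded n s /\ evalN bot op n s = a.

Definition delta_regular {Sym : Type} (ar : Sym -> nat)
  (Delta : forall X : Type, term Sym X -> Prop) {A : Type}
  (le : A -> A -> Prop) (bot : A) (op : Sym -> (nat -> A) -> A) : Prop :=
  ordered_alg ar le bot op /\
  (forall t, Delta A t -> exists c, is_lub le (DS ar bot op t) c) /\
  (forall f (ts : nat -> term Sym A) (cs : nat -> A),
     (forall i, i < ar f -> Delta A (ts i) /\ is_lub le (DS ar bot op (ts i)) (cs i)) ->
     is_lub le
       (fun a => exists b, (forall i, i < ar f -> DS ar bot op (ts i) (b i)) /\ a = op f b)
       (op f cs)).

From Stdlib Require Import List Arith Lia FunctionalExtensionality ClassicalEpsilon.
Import ListNotations.
Set Implicit Arguments.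

(* For T in Delta (Delta A), every finite approximation of the flattened term
   lies below the substitution into the truncation of T at some depth m.  On a
   finite term, preservation of suprema of Delta-sets by the operations makes
   the supremum of the Delta-set of the substituted term depend only on the
   suprema at the leaves.  Substituting either the terms s_i or the one-node
   terms beta s_i yields the same leaf suprema, so each side of
   beta (mu T) = beta (Delta beta T) bounds the other. *)

Section Coterms.

Context {Sym X : Type} (ar : Sym -> nat).
Implicit Types (t u : term Sym X).

Lemma isCT_child t i : isCT ar t -> isCT ar (fun q => t (i :: q)).
Proof. intros Ht p j Hp. exact (Ht (i :: p) j Hp). Qed.

Lemma bounded_child n t i : bounded (S n) t -> bounded n (fun q => t (i :: q)).
Proof. intros Ht p Hp; apply Ht; simpl; lia. Qed.

Lemma teta_isCT (x : X) : isCT ar (teta x).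
Proof. intros [|? ?] i H; simpl in H; congruence. Qed.

Lemma teta_bounded (x : X) : bounded 1 (@teta Sym X x).
Proof. intros [|? ?] Hp; simpl in *; [lia|reflexivity]. Qed.

Lemma teta_isFT (x : X) : isFT ar (teta x).
Proof. split; [apply teta_isCT|exists 1; apply teta_bounded]. Qed.

Lemma top_child f (ts : nat -> term Sym X) i :
  i < ar f -> (fun q => top ar f ts (i :: q)) = ts i.
Proof.
  intros Hi. apply functional_extensionality; intros q. simpl.
  apply Nat.ltb_lt in Hi; rewrite Hi; reflexivity.
Qed.

Lemma isCT_top f (ts : nat -> term Sym X) :
  (forall i, i < ar f -> isCT ar (ts i)) -> isCT ar (top ar f ts).
Proof.
  intros Hts [|i q] j H; simpl in H.
  - destruct (j <? ar f) eqn:E; [|congruence].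
    exists (inl f); split; [reflexivity|]. apply Nat.ltb_lt; exact E.
  - destruct (i <? ar f) eqn:E; [|congruence].
    apply Nat.ltb_lt in E. destruct (Hts i E q j H) as [l Hl].
    exists l. simpl. apply Nat.ltb_lt in E. rewrite E. exact Hl.
Qed.

Lemma bounded_top f (ts : nat -> term Sym X) n :
  (forall i, i < ar f -> bounded n (ts i)) -> bounded (S n) (top ar f ts).
Proof.
  intros Hts [|i q] Hp; simpl in Hp; [lia|]. simpl.
  destruct (i <? ar f) eqn:E; [|reflexivity].
  apply Nat.ltb_lt in E. apply (Hts i E). lia.
Qed.

Lemma tle_top f (ts us : nat -> term Sym X) :
  (forall i, i < ar f -> tle (ts i) (us i)) -> tle (top ar f ts) (top ar f us).
Proof.
  intros Htu [|i q] l H; simpl in *; [exact H|].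
  destruct (i <? ar f) eqn:E; [|congruence].
  apply Nat.ltb_lt in E. exact (Htu i E q l H).
Qed.

Lemma directed_child (u : nat -> term Sym X) i :
  directed tle u -> directed tle (fun n q => u n (i :: q)).
Proof.
  intros Hd j k; destruct (Hd j k) as [m [H1 H2]]; exists m; split;
    intros q l H; [apply H1|apply H2]; exact H.
Qed.

(* The pointwise union of a directed family is a coterm bounding it, hence above
   its supremum. *)
Lemma ct_lub_attained (u : nat -> term Sym X) s :
  (forall n, isCT ar (u n)) -> directed tle u -> ct_lub ar u s ->
  forall p l, s p = Some l -> exists n, u n p = Some l.
Proof.
  intros Hct Hd [_ Hleast].
  destruct (choice (fun (p : list nat) (v : option (Sym + X)) =>
    (v = None /\ forall n, u n p = None) \/ (exists n, v = u n p /\ u n p <> None)))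
    as [b Hb].
  { intros p. destruct (classic (exists n, u n p <> None)) as [[n Hn]|Hn].
    - exists (u n p); right; eauto.
    - exists None; left; split; [reflexivity|]. intros n.
      destruct (u n p) eqn:E; [|reflexivity].
      exfalso; apply Hn; exists n; congruence. }
  assert (Hub : forall n, tle (u n) b).
  { intros m p l H. destruct (Hb p) as [[_ Hn]|[n [-> Hn]]]; [congruence|].
    destruct (u n p) as [l'|] eqn:E; [|congruence].
    destruct (Hd m n) as [k [K1 K2]].
    pose proof (K1 _ _ H). pose proof (K2 _ _ E). congruence. }
  assert (Hsb : tle s b).
  { apply Hleast; [|exact Hub].
    intros p i Hp. destruct (Hb (p ++ [i])) as [[? _]|[n [_ Hn]]]; [congruence|].
    destruct (Hct n p i Hn) as [l [Hl Hi]]. exists l; split; [|exact Hi].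
    exact (Hub n p l Hl). }
  intros p l Hp. apply Hsb in Hp.
  destruct (Hb p) as [[? _]|[n [? _]]]; [congruence|]. exists n; congruence.
Qed.

Definition cut (m : nat) t : term Sym X :=
  fun p => if length p <? m then t p else None.

Lemma cut_isCT m t : isCT ar t -> isCT ar (cut m t).
Proof.
  intros Ht p i Hp. unfold cut in *.
  destruct (length (p ++ [i]) <? m) eqn:E; [|congruence].
  destruct (Ht p i Hp) as [l [Hl Hi]]. exists l; split; [|exact Hi].
  rewrite length_app in E. simpl in E. apply Nat.ltb_lt in E.
  replace (length p <? m) with true by (symmetry; apply Nat.ltb_lt; lia).
  exact Hl.
Qed.

Lemma cut_bounded m t : bounded m (cut m t).
Proof.
  intros p Hp; unfold cut. destruct (length p <? m) eqn:E; [|reflexivity].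
  apply Nat.ltb_lt in E; lia.
Qed.

Lemma cut_tle m t : tle (cut m t) t.
Proof. intros p l; unfold cut; destruct (length p <? m); congruence. Qed.

End Coterms.

Section Substitution.

Context {Sym X Y : Type} (ar : Sym -> nat) (g : Y -> term Sym X).
Implicit Types (t u : term Sym Y).

Lemma subst_none t p : t [] = None -> subst t g p = None.
Proof. intros H; destruct p; simpl; rewrite H; reflexivity. Qed.

Lemma subst_leaf t p y : t [] = Some (inr y) -> subst t g p = g y p.
Proof. intros H; destruct p; simpl; rewrite H; reflexivity. Qed.

Lemma subst_node_nil t f : t [] = Some (inl f) -> subst t g [] = Some (inl f).
Proof. intros H; simpl; rewrite H; reflexivity. Qed.

Lemma subst_node_cons t f i p :
  t [] = Some (inl f) -> subst t g (i :: p) = subst (fun q => t (i :: q)) g p.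
Proof. intros H; simpl; rewrite H; reflexivity. Qed.

Lemma subst_none_all t : t [] = None -> subst t g = tbot.
Proof. intros H; apply functional_extensionality; intros p; apply subst_none, H. Qed.

Lemma subst_leaf_all t y : t [] = Some (inr y) -> subst t g = g y.
Proof. intros H; apply functional_extensionality; intros p; apply subst_leaf, H. Qed.

Lemma subst_teta y : subst (teta y) g = g y.
Proof. apply functional_extensionality; intros [|i p]; reflexivity. Qed.

Lemma subst_top f ts : subst (top ar f ts) g = top ar f (fun i => subst (ts i) g).
Proof.
  apply functional_extensionality; intros [|i q]; [reflexivity|].
  rewrite (subst_node_cons (top ar f ts) i q (f:=f) eq_refl).
  unfold top at 2. destruct (i <? ar f) eqn:E.
  - f_equal. apply functional_extensionality; intros r. unfold top; rewrite E; reflexivity.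
  - apply subst_none. unfold top; rewrite E; reflexivity.
Qed.

Lemma subst_node t f :
  isCT ar t -> t [] = Some (inl f) ->
  subst t g = top ar f (fun i => subst (fun q => t (i :: q)) g).
Proof.
  intros Ht E. apply functional_extensionality; intros [|i q].
  - apply subst_node_nil; exact E.
  - rewrite (subst_node_cons _ _ _ E). simpl.
    destruct (i <? ar f) eqn:Ei; [reflexivity|]. apply subst_none.
    destruct (t [i]) eqn:Eti; [|reflexivity].
    destruct (Ht [] i) as [l [Hl Hi]]; [simpl; congruence|].
    rewrite E in Hl; injection Hl as <-. simpl in Hi. apply Nat.ltb_lt in Hi; congruence.
Qed.

Lemma subst_isCT t : (forall y, isCT ar (g y)) -> isCT ar t -> isCT ar (subst t g).
Proof.
  intros Hg Ht p. revert t Ht. induction p as [|j p IH]; intros t Ht i H;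
    destruct (t []) as [[f|y]|] eqn:E;
    try (rewrite (subst_leaf _ _ E) in H; rewrite (subst_leaf _ _ E); exact (Hg y _ i H));
    try (exfalso; apply H; apply subst_none; exact E).
  - exists (inl f); split; [exact (subst_node_nil _ E)|].
    rewrite (subst_node Ht E) in H. simpl in H |- *.
    destruct (i <? ar f) eqn:Ei; [apply Nat.ltb_lt; exact Ei|congruence].
  - simpl app in H. rewrite (subst_node_cons _ _ _ E) in H; rewrite (subst_node_cons _ _ _ E).
    apply IH; [apply isCT_child; exact Ht|exact H].
Qed.

Lemma subst_mono t u : tle t u -> tle (subst t g) (subst u g).
Proof.
  intros Htu p. revert t u Htu. induction p as [|i p IH]; intros t u Htu l H;
    destruct (t []) as [[f|y]|] eqn:E;
    try (rewrite subst_none in H; [discriminate|exact E]);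
    pose proof (Htu [] _ E) as E';
    try (rewrite (subst_leaf _ _ E) in H; rewrite (subst_leaf _ _ E'); exact H).
  - rewrite (subst_node_nil _ E'); rewrite (subst_node_nil _ E) in H; exact H.
  - rewrite (subst_node_cons _ _ _ E) in H; rewrite (subst_node_cons _ _ _ E').
    exact (IH _ _ (fun q => Htu (i :: q)) l H).
Qed.

Lemma subst_attained p : forall t (u : nat -> term Sym Y) l,
  directed tle u -> (forall q l, t q = Some l -> exists n, u n q = Some l) ->
  subst t g p = Some l -> exists n, subst (u n) g p = Some l.
Proof.
  induction p as [|i p IH]; intros t u l Hd Hat H;
    destruct (t []) as [[f|y]|] eqn:E;
    try (rewrite subst_none in H; [discriminate|exact E]).
  - destruct (Hat [] _ E) as [n Hn]. exists n.
    rewrite (subst_node_nil _ Hn); rewrite (subst_node_nil _ E) in H; exact H.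
  - destruct (Hat [] _ E) as [n Hn]. exists n.
    rewrite (subst_leaf _ _ Hn); rewrite (subst_leaf _ _ E) in H; exact H.
  - rewrite (subst_node_cons _ _ _ E) in H.
    destruct (IH _ (fun n q => u n (i :: q)) l (directed_child i Hd)
                (fun q => Hat (i :: q)) H) as [n1 Hn1].
    destruct (Hat [] _ E) as [n0 Hn0].
    destruct (Hd n0 n1) as [m [H0 H1]]. exists m.
    rewrite (subst_node_cons _ _ _ (H0 _ _ Hn0)).
    exact (subst_mono (fun q => H1 (i :: q)) _ Hn1).
  - destruct (Hat [] _ E) as [n Hn]. exists n.
    rewrite (subst_leaf _ _ Hn); rewrite (subst_leaf _ _ E) in H; exact H.
Qed.

Lemma subst_omega_morph :
  (forall y, isCT ar (g y)) -> omega_morph ar (fun t => subst t g).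
Proof.
  intros Hg. split; [|split; [|split; [|split]]].
  - intros t; apply subst_isCT; exact Hg.
  - apply subst_none_all; reflexivity.
  - intros t u _ _; apply subst_mono.
  - intros f ts _; apply subst_top.
  - intros u s Hct Hd _ Hlub. split.
    + intros n; apply subst_mono; apply (proj1 Hlub).
    + intros b _ Hub p l H.
      destruct (subst_attained p s Hd (ct_lub_attained Hct Hd Hlub) H) as [n Hn].
      exact (Hub n p l Hn).
Qed.

Lemma subst_cut p : forall m t, length p < m -> subst (cut m t) g p = subst t g p.
Proof.
  induction p as [|i p IH]; intros m t Hm; (destruct m as [|m]; [simpl in Hm; lia|]);
    simpl; unfold cut at 1; simpl; destruct (t []) as [[f|y]|]; try reflexivity.
  replace (fun q => cut (S m) t (i :: q)) with (cut m (fun q => t (i :: q))).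
  - apply IH; simpl in Hm; lia.
  - apply functional_extensionality; intros q; reflexivity.
Qed.

Lemma tle_subst_cut m s t :
  bounded m s -> tle s (subst t g) -> tle s (subst (cut m t) g).
Proof.
  intros Hs Hst p l H. destruct (Nat.lt_ge_cases (length p) m) as [Hp|Hp].
  - rewrite subst_cut by exact Hp. exact (Hst p l H).
  - rewrite (Hs p Hp) in H; discriminate.
Qed.

End Substitution.

Lemma is_lub_unique {T : Type} (le : T -> T -> Prop) (P : T -> Prop) x y :
  (forall a b, le a b -> le b a -> a = b) -> is_lub le P x -> is_lub le P y -> x = y.
Proof. intros Hanti [Hx Hxl] [Hy Hyl]. apply Hanti; [apply Hxl|apply Hyl]; assumption. Qed.

Lemma finite_family_bound (k : nat) (m : nat -> nat) :
  exists M, forall i, i < k -> m i <= M.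
Proof.
  induction k as [|k [M HM]]; [exists 0; lia|].
  exists (Nat.max M (m k)). intros i Hi.
  destruct (Nat.eq_dec i k) as [->|]; [lia|]. specialize (HM i ltac:(lia)); lia.
Qed.

Section Evaluation.

Context {Sym A : Type} {ar : Sym -> nat} {le : A -> A -> Prop} {bot : A}
  {op : Sym -> (nat -> A) -> A}.
Implicit Types (s t u : term Sym A).

Lemma evalN_none n t : t [] = None -> evalN bot op n t = bot.
Proof. intros H; destruct n; simpl; [|rewrite H]; reflexivity. Qed.

Lemma evalN_fuel m : forall M s,
  bounded m s -> m <= M -> evalN bot op M s = evalN bot op m s.
Proof.
  induction m as [|m IH]; intros M s Hb HM.
  - apply evalN_none. apply Hb; simpl; lia.
  - destruct M as [|M]; [lia|]. simpl. destruct (s []) as [[f|y]|]; [|reflexivity..].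
    f_equal. apply functional_extensionality; intros i.
    apply IH; [apply bounded_child; exact Hb|lia].
Qed.

Lemma DS_mono t u a : tle t u -> DS ar bot op t a -> DS ar bot op u a.
Proof.
  intros Htu [s [n [[Hs Hst] Hev]]].
  exists s, n; split; [split; [exact Hs|]|exact Hev].
  intros p l H; apply Htu, Hst, H.
Qed.

Lemma DS_top_inv f ts a :
  DS ar bot op (top ar f ts) a ->
  a = bot \/ exists b, (forall i, i < ar f -> DS ar bot op (ts i) (b i)) /\ a = op f b.
Proof.
  intros [s [[|m] [[[Hct _] Hst] [Hb <-]]]]; [left; reflexivity|].
  simpl. destruct (s []) as [l|] eqn:E; [|left; reflexivity].
  pose proof (Hst _ _ E) as E'. simpl in E'. injection E' as <-.
  right. exists (fun i => evalN bot op m (fun q => s (i :: q))). split; [|reflexivity].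
  intros i Hi. exists (fun q => s (i :: q)), m.
  split; [split; [split|]|split; [apply bounded_child; exact Hb|reflexivity]].
  - apply isCT_child; exact Hct.
  - exists m; apply bounded_child; exact Hb.
  - rewrite <- (top_child ar f ts Hi). exact (fun q => Hst (i :: q)).
Qed.

Hypothesis Halg : ordered_alg ar le bot op.

Lemma evalN_top f ts n :
  evalN bot op (S n) (top ar f ts) = op f (fun i => evalN bot op n (ts i)).
Proof.
  destruct Halg as [_ [_ [_ [_ [Hcong _]]]]]. apply Hcong; intros i Hi.
  change (evalN bot op n (fun q => top ar f ts (i :: q)) = evalN bot op n (ts i)).
  rewrite (top_child ar f ts Hi). reflexivity.
Qed.

Lemma DS_top_intro f ts b :
  (forall i, i < ar f -> DS ar bot op (ts i) (b i)) -> DS ar bot op (top ar f ts) (op f b).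
Proof.
  intros Hb. destruct Halg as [_ [_ [_ [_ [Hcong _]]]]].
  destruct (choice (fun i (sm : term Sym A * nat) => i < ar f ->
      tll ar (fst sm) (ts i) /\ bounded (snd sm) (fst sm) /\
      evalN bot op (snd sm) (fst sm) = b i)) as [sm Hsm].
  { intros i. destruct (Nat.lt_ge_cases i (ar f)) as [Hi|Hi].
    - destruct (Hb i Hi) as [s [m Hs]]. exists (s, m); intros _; exact Hs.
    - exists (tbot, 0); lia. }
  destruct (finite_family_bound (ar f) (fun i => snd (sm i))) as [M HM].
  assert (HbM : forall i, i < ar f -> bounded M (fst (sm i))).
  { intros i Hi p Hp. apply (Hsm i Hi). specialize (HM i Hi); simpl in HM; lia. }
  exists (top ar f (fun i => fst (sm i))), (S M).
  split; [split; [split|]|split].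
  - apply isCT_top. intros i Hi; apply (Hsm i Hi).
  - exists (S M); apply bounded_top; exact HbM.
  - apply tle_top. intros i Hi; apply (Hsm i Hi).
  - apply bounded_top; exact HbM.
  - rewrite evalN_top. apply Hcong. intros i Hi.
    destruct (Hsm i Hi) as [_ [Hbd <-]]. apply evalN_fuel; [exact Hbd|apply HM, Hi].
Qed.

Lemma lub_DS_tbot : is_lub le (DS ar bot op tbot) bot.
Proof.
  destruct Halg as [Hrefl [_ [_ [Hbot _]]]]. split; [|intros b _; apply Hbot].
  intros a [s [n [[_ Hs] [_ <-]]]].
  rewrite evalN_none; [apply Hrefl|].
  destruct (s []) eqn:E; [|reflexivity]. apply Hs in E; discriminate.
Qed.

Lemma lub_DS_teta a : is_lub le (DS ar bot op (teta a)) a.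
Proof.
  destruct Halg as [Hrefl [_ [_ [Hbot _]]]]. split.
  - intros b [s [[|n] [[_ Hs] [_ <-]]]]; simpl; [apply Hbot|].
    destruct (s []) eqn:E; [|apply Hbot].
    apply Hs in E. injection E as <-. apply Hrefl.
  - intros b Hb. apply Hb. exists (teta a), 1.
    split; [split; [apply teta_isFT|intros p l H; exact H]|split; [|reflexivity]].
    apply teta_bounded.
Qed.

End Evaluation.

Lemma lub_DS_top {Sym A : Type} (ar : Sym -> nat) Delta le (bot : A) op f ts cs :
  delta_regular ar Delta le bot op ->
  (forall i, i < ar f -> Delta A (ts i) /\ is_lub le (DS ar bot op (ts i)) (cs i)) ->
  is_lub le (DS ar bot op (top ar f ts)) (op f cs).
Proof.
  intros [Halg [_ Hsup]] Hts. destruct (Hsup f ts cs Hts) as [Hup Hleast].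
  split.
  - intros a Ha. destruct (DS_top_inv Ha) as [->|Hb]; [apply Halg|apply Hup, Hb].
  - intros b Hb. apply Hleast. intros a [b' [Hb' ->]].
    apply Hb, (DS_top_intro Halg); assumption.
Qed.

Lemma quasi_regular_subst {Sym : Type} (ar : Sym -> nat) Delta {X Y : Type}
  (g : Y -> term Sym X) T :
  quasi_regular ar Delta -> (forall y, Delta X (g y)) -> Delta Y T -> Delta X (subst T g).
Proof.
  intros [HQ1 HQ2] Hg HT. apply (HQ2 Y X (fun t => subst t g)); [| |exact HT].
  - apply subst_omega_morph. intros y. apply (proj1 (HQ1 X)), Hg.
  - intros y; rewrite subst_teta; apply Hg.
Qed.

Fixpoint evalV {Sym X A : Type} (bot : A) (op : Sym -> (nat -> A) -> A)
  (c : X -> A) (n : nat) (t : term Sym X) : A :=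
  match n with
  | 0 => bot
  | S n' =>
      match t [] with
      | None => bot
      | Some (inr x) => c x
      | Some (inl f) => op f (fun i => evalV bot op c n' (fun q => t (i :: q)))
      end
  end.

Section Flattening.

Context {Sym X A : Type} {ar : Sym -> nat} {Delta : forall X : Type, term Sym X -> Prop}
  {le : A -> A -> Prop} {bot : A} {op : Sym -> (nat -> A) -> A}.
Arguments Delta : clear implicits.
Hypothesis HQ : quasi_regular ar Delta.
Hypothesis HR : delta_regular ar Delta le bot op.

(* Because the operations preserve suprema of Delta-sets, the supremum for a
   finite term substituted by [g] is computed from the suprema [c] at the leaves. *)
Lemma lub_DS_subst_finite (g : X -> term Sym A) (c : X -> A) :
  (forall x, Delta A (g x) /\ is_lub le (DS ar bot op (g x)) (c x)) ->
  forall n T, isCT ar T -> bounded n T ->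
  Delta A (subst T g) /\ is_lub le (DS ar bot op (subst T g)) (evalV bot op c n T).
Proof.
  intros Hg. destruct (proj1 HQ A) as [_ [_ [Hbot Htop]]].
  assert (Htbot : Delta A tbot /\ is_lub le (DS ar bot op tbot) bot).
  { split; [exact Hbot|apply lub_DS_tbot, HR]. }
  induction n as [|n IH]; intros T HT Hb.
  - rewrite (subst_none_all g T) by (apply Hb; simpl; lia). exact Htbot.
  - simpl. destruct (T []) as [[f|x]|] eqn:E.
    + rewrite (subst_node g HT E).
      assert (Hch : forall i, Delta A (subst (fun q => T (i :: q)) g) /\
         is_lub le (DS ar bot op (subst (fun q => T (i :: q)) g))
           (evalV bot op c n (fun q => T (i :: q)))).
      { intros i; apply IH; [apply isCT_child|apply bounded_child]; assumption. }
      split; [apply Htop; intros i _; apply Hch|].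
      eapply lub_DS_top; [exact HR|]; intros i _; apply Hch.
    + rewrite (subst_leaf_all g T E). apply Hg.
    + rewrite (subst_none_all g T E). exact Htbot.
Qed.

Lemma lub_subst_le (g g' : X -> term Sym A) (c : X -> A) (T : term Sym X) b b' :
  (forall x, Delta A (g x) /\ is_lub le (DS ar bot op (g x)) (c x)) ->
  (forall x, Delta A (g' x) /\ is_lub le (DS ar bot op (g' x)) (c x)) ->
  Delta X T ->
  is_lub le (DS ar bot op (subst T g)) b -> is_lub le (DS ar bot op (subst T g')) b' ->
  le b b'.
Proof.
  intros Hg Hg' HT [_ Hb] [Hb' _].
  pose proof HR as [[_ [_ [Htrans _]]] _].
  assert (HTct : isCT ar T) by (apply (proj1 HQ X); exact HT).
  apply Hb. intros a [s [m [[Hs Hst] [Hsm Ha]]]].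
  pose proof (cut_isCT m HTct) as Hcut_ct. pose proof (cut_bounded (m:=m) T) as Hcut_b.
  destruct (lub_DS_subst_finite _ _ Hg Hcut_ct Hcut_b) as [_ [Hup _]].
  destruct (lub_DS_subst_finite _ _ Hg' Hcut_ct Hcut_b) as [_ [_ Hleast]].
  apply Htrans with (evalV bot op c m (cut m T)).
  - apply Hup. exists s, m.
    split; [split; [exact Hs|apply tle_subst_cut; assumption]|split; assumption].
  - apply Hleast. intros a' Ha'. apply Hb'. apply DS_mono with (2 := Ha').
    apply subst_mono, cut_tle.
Qed.

End Flattening.

Theorem mainTheorem2 (Sym : Type) (ar : Sym -> nat)
  (Delta : forall X : Type, term Sym X -> Prop)
  (A : Type) (le : A -> A -> Prop) (bot : A) (op : Sym -> (nat -> A) -> A)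
  (beta : term Sym A -> A) :
  quasi_regular ar Delta ->
  delta_regular ar Delta le bot op ->
  (forall t, Delta A t -> is_lub le (DS ar bot op t) (beta t)) ->
  (forall a : A, beta (teta a) = a) /\
  (forall T : term Sym {t : term Sym A | Delta A t},
     Delta _ T ->
     beta (subst T (fun s => proj1_sig s)) =
     beta (subst T (fun s => teta (beta (proj1_sig s))))).
Proof.
  intros HQ HR Hbeta.
  pose proof (proj1 HR) as Halg.
  pose proof (proj1 (proj2 Halg)) as Hanti.
  assert (Hteta : forall a : A, Delta A (teta a)) by apply (proj1 HQ A).
  assert (Hbeta_teta : forall a : A, beta (teta a) = a).
  { intros a. apply (is_lub_unique Hanti (Hbeta _ (Hteta a)) (lub_DS_teta Halg a)). }
  split; [exact Hbeta_teta|]. intros T HT.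
  set (c := fun s : {t : term Sym A | Delta A t} => beta (proj1_sig s)).
  assert (Hg : forall s,
    Delta A (proj1_sig s) /\ is_lub le (DS ar bot op (proj1_sig s)) (c s)).
  { intros [t Ht]; split; [exact Ht|apply Hbeta, Ht]. }
  assert (Hg' : forall s,
    Delta A (teta (c s)) /\ is_lub le (DS ar bot op (teta (c s))) (c s)).
  { intros s; split; [apply Hteta|apply lub_DS_teta, Halg]. }
  assert (Hl : is_lub le (DS ar bot op (subst T (fun s => proj1_sig s)))
                 (beta (subst T (fun s => proj1_sig s)))).
  { apply Hbeta. apply (quasi_regular_subst _ _ HQ); [intros s; apply Hg|exact HT]. }
  assert (Hl' : is_lub le (DS ar bot op (subst T (fun s => teta (c s))))
                  (beta (subst T (fun s => teta (c s))))).
  { apply Hbeta. apply (quasi_regular_subst _ _ HQ); [intros s; apply Hg'|exact HT]. }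
  apply Hanti.
  - exact (lub_subst_le HQ HR _ _ _ _ Hg Hg' HT Hl Hl').
  - exact (lub_subst_le HQ HR _ _ _ _ Hg' Hg HT Hl' Hl).
Qed.
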